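(* Let $\mu\in(0,1/2]$, $d=\sqrt{1-3\mu+3\mu^2}$, $\lambda_1=\tfrac32(1-d)$, $\lambda_2=\tfrac32(1+d)$, and consider the system $\ddot x-2\dot y=\Omega_x$, $\ddot y+2\dot x=\Omega_y$, $\ddot z=\Omega_z$ with $\Omega=\tfrac12(\lambda_2x^2+\lambda_1y^2-z^2)+\frac{1}{\sqrt{x^2+y^2+z^2}}$. Then all equilibrium points lie in the plane $z=0$, and there are exactly four of them: $$L_1=(\lambda_2^{-1/3},0,0),\ L_2=(-\lambda_2^{-1/3},0,0),\ L_3=(0,\lambda_1^{-1/3},0),\ L_4=(0,-\lambda_1^{-1/3},0).$$
   Context: Equilibrium points are the critical points of $\Omega$ on $\mathbb{R}^3\setminus\{0\}$ (with zero velocity). *)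

From Stdlib Require Import Reals.
From Coquelicot Require Import Coquelicot.
Open Scope R_scope.

Definition dpar (mu : R) : R := sqrt (1 - 3 * mu + 3 * mu ^ 2).
Definition lambda1 (mu : R) : R := 3 / 2 * (1 - dpar mu).
Definition lambda2 (mu : R) : R := 3 / 2 * (1 + dpar mu).

Definition Omega (mu x y z : R) : R :=
  1 / 2 * (lambda2 mu * x ^ 2 + lambda1 mu * y ^ 2 - z ^ 2)
  + 1 / sqrt (x ^ 2 + y ^ 2 + z ^ 2).

(* Equilibrium point (zero velocity): a critical point of Omega on R^3 \ {0},
   i.e. all three partial derivatives exist and vanish. *)
Definition equilibrium (mu x y z : R) : Prop :=
  (x, y, z) <> (0, 0, 0) /\
  is_derive (fun t => Omega mu t y z) x 0 /\
  is_derive (fun t => Omega mu x t z) y 0 /\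
  is_derive (fun t => Omega mu x y t) z 0.

From Stdlib Require Import Reals Lra Psatz.
From Coquelicot Require Import Coquelicot.
Open Scope R_scope.

(* With r = |(x, y, z)|, the partial derivatives of Omega are x (lambda2 - r^-3),
   y (lambda1 - r^-3) and z (-1 - r^-3).  The last one vanishes only for z = 0;
   since lambda1 <> lambda2, at most one of x, y is nonzero, and then r is |x|
   (resp. |y|), so the remaining equation reads |x|^-3 = lambda2
   (resp. |y|^-3 = lambda1). *)

Lemma lambda1_pos (mu : R) : 0 < mu < 1 -> 0 < lambda1 mu.
Proof.
  intros hmu; unfold lambda1, dpar.
  assert (0 <= 1 - 3 * mu + 3 * mu ^ 2) by nra.
  pose proof (sqrt_lt_1_alt (1 - 3 * mu + 3 * mu ^ 2) 1 ltac:(nra)) as hd.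
  rewrite sqrt_1 in hd; lra.
Qed.

Lemma lambda1_lt_lambda2 (mu : R) : lambda1 mu < lambda2 mu.
Proof.
  unfold lambda1, lambda2, dpar.
  assert (0 < sqrt (1 - 3 * mu + 3 * mu ^ 2)).
  { apply sqrt_lt_R0; pose proof (pow2_ge_0 (mu - 1 / 2)); nra. }
  lra.
Qed.

Lemma is_derive_quadratic_plus_inv_sqrt (f : R -> R) (a b c t : R) :
  (forall s, f s = a / 2 * s ^ 2 + b + 1 / sqrt (s ^ 2 + c)) -> 0 < t ^ 2 + c ->
  is_derive f t (t * (a - / sqrt (t ^ 2 + c) ^ 3)).
Proof.
  intros hf hpos.
  assert (hr : 0 < sqrt (t ^ 2 + c)) by (apply sqrt_lt_R0; lra).
  apply (is_derive_ext (fun s => a / 2 * s ^ 2 + b + 1 / sqrt (s ^ 2 + c)));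
    [intros s; symmetry; apply hf |].
  auto_derive; replace (t * (t * 1) + c) with (t ^ 2 + c) by ring.
  - repeat split; lra.
  - field; lra.
Qed.

Definition inv_cubed_norm (x y z : R) : R := / sqrt (x ^ 2 + y ^ 2 + z ^ 2) ^ 3.

Lemma is_derive_Omega_x (mu x y z : R) : 0 < x ^ 2 + y ^ 2 + z ^ 2 ->
  is_derive (fun t => Omega mu t y z) x (x * (lambda2 mu - inv_cubed_norm x y z)).
Proof.
  intros hpos; unfold inv_cubed_norm.
  replace (x ^ 2 + y ^ 2 + z ^ 2) with (x ^ 2 + (y ^ 2 + z ^ 2)) in * by ring.
  apply (is_derive_quadratic_plus_inv_sqrt _ _ ((lambda1 mu * y ^ 2 - z ^ 2) / 2));
    [intros t; unfold Omega | exact hpos].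
  replace (t ^ 2 + y ^ 2 + z ^ 2) with (t ^ 2 + (y ^ 2 + z ^ 2)) by ring.
  (* hiding [1 / sqrt _] keeps [field] from requiring [sqrt _ <> 0] *)
  set (w := 1 / sqrt _); field.
Qed.

Lemma is_derive_Omega_y (mu x y z : R) : 0 < x ^ 2 + y ^ 2 + z ^ 2 ->
  is_derive (fun t => Omega mu x t z) y (y * (lambda1 mu - inv_cubed_norm x y z)).
Proof.
  intros hpos; unfold inv_cubed_norm.
  replace (x ^ 2 + y ^ 2 + z ^ 2) with (y ^ 2 + (x ^ 2 + z ^ 2)) in * by ring.
  apply (is_derive_quadratic_plus_inv_sqrt _ _ ((lambda2 mu * x ^ 2 - z ^ 2) / 2));
    [intros t; unfold Omega | exact hpos].
  replace (x ^ 2 + t ^ 2 + z ^ 2) with (t ^ 2 + (x ^ 2 + z ^ 2)) by ring.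
  set (w := 1 / sqrt _); field.
Qed.

Lemma is_derive_Omega_z (mu x y z : R) : 0 < x ^ 2 + y ^ 2 + z ^ 2 ->
  is_derive (fun t => Omega mu x y t) z (z * (-1 - inv_cubed_norm x y z)).
Proof.
  intros hpos; unfold inv_cubed_norm.
  replace (x ^ 2 + y ^ 2 + z ^ 2) with (z ^ 2 + (x ^ 2 + y ^ 2)) in * by ring.
  apply (is_derive_quadratic_plus_inv_sqrt _ _ ((lambda2 mu * x ^ 2 + lambda1 mu * y ^ 2) / 2));
    [intros t; unfold Omega | exact hpos].
  replace (x ^ 2 + y ^ 2 + t ^ 2) with (t ^ 2 + (x ^ 2 + y ^ 2)) by ring.
  set (w := 1 / sqrt _); field.
Qed.

Lemma nonzero_iff_sum_sq_pos (x y z : R) :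
  (x, y, z) <> (0, 0, 0) <-> 0 < x ^ 2 + y ^ 2 + z ^ 2.
Proof.
  split.
  - intros hne.
    destruct (Req_dec x 0) as [-> | hx]; [destruct (Req_dec y 0) as [-> | hy] |].
    + assert (z <> 0) by (intros ->; now apply hne).
      pose proof (pow2_gt_0 z); nra.
    + pose proof (pow2_gt_0 y); nra.
    + pose proof (pow2_gt_0 x); nra.
  - intros hpos heq; injection heq as -> -> ->; lra.
Qed.

Lemma equilibrium_iff (mu x y z : R) :
  equilibrium mu x y z <->
  0 < x ^ 2 + y ^ 2 + z ^ 2 /\
  x * (lambda2 mu - inv_cubed_norm x y z) = 0 /\
  y * (lambda1 mu - inv_cubed_norm x y z) = 0 /\
  z * (-1 - inv_cubed_norm x y z) = 0.
Proof.
  unfold equilibrium; rewrite nonzero_iff_sum_sq_pos; split.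
  - intros (hpos & hx & hy & hz); split; [exact hpos |].
    apply is_derive_unique in hx, hy, hz.
    rewrite (is_derive_unique _ _ _ (is_derive_Omega_x mu x y z hpos)) in hx.
    rewrite (is_derive_unique _ _ _ (is_derive_Omega_y mu x y z hpos)) in hy.
    rewrite (is_derive_unique _ _ _ (is_derive_Omega_z mu x y z hpos)) in hz.
    auto.
  - intros (hpos & hx & hy & hz); split; [exact hpos |].
    split; [| split]; [rewrite <- hx | rewrite <- hy | rewrite <- hz];
      auto using is_derive_Omega_x, is_derive_Omega_y, is_derive_Omega_z.
Qed.

Lemma inv_cubed_norm_pos (x y z : R) :
  0 < x ^ 2 + y ^ 2 + z ^ 2 -> 0 < inv_cubed_norm x y z.
Proof.
  intros hpos; apply Rinv_0_lt_compat, pow_lt, sqrt_lt_R0, hpos.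
Qed.

Lemma equilibrium_on_axes (mu x y z : R) :
  equilibrium mu x y z -> (y = 0 /\ z = 0) \/ (x = 0 /\ z = 0).
Proof.
  rewrite equilibrium_iff; intros (hpos & hx & hy & hz).
  pose proof (inv_cubed_norm_pos x y z hpos) as hk.
  pose proof (lambda1_lt_lambda2 mu).
  assert (z = 0) by (destruct (Rmult_integral _ _ hz); lra).
  destruct (Rmult_integral _ _ hx) as [-> | hx']; [now right | left].
  split; [destruct (Rmult_integral _ _ hy); lra | assumption].
Qed.

Lemma inv_cubed_norm_x_axis (a : R) : inv_cubed_norm a 0 0 = / Rabs a ^ 3.
Proof.
  unfold inv_cubed_norm.
  replace (a ^ 2 + 0 ^ 2 + 0 ^ 2) with (Rabs a ^ 2) by (rewrite pow2_abs; ring).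
  now rewrite sqrt_pow2 by apply Rabs_pos.
Qed.

Lemma inv_cubed_norm_y_axis (a : R) : inv_cubed_norm 0 a 0 = / Rabs a ^ 3.
Proof.
  unfold inv_cubed_norm.
  replace (0 ^ 2 + a ^ 2 + 0 ^ 2) with (Rabs a ^ 2) by (rewrite pow2_abs; ring).
  now rewrite sqrt_pow2 by apply Rabs_pos.
Qed.

Lemma equilibrium_x_axis (mu a : R) :
  equilibrium mu a 0 0 <-> a <> 0 /\ lambda2 mu = / Rabs a ^ 3.
Proof.
  rewrite equilibrium_iff, inv_cubed_norm_x_axis; split.
  - intros (hpos & hx & _).
    assert (ha : a <> 0) by (intros ->; lra).
    split; [exact ha | destruct (Rmult_integral _ _ hx); lra].
  - intros [ha ->]; pose proof (pow2_gt_0 a ha).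
    repeat split; [lra | ring ..].
Qed.

Lemma equilibrium_y_axis (mu a : R) :
  equilibrium mu 0 a 0 <-> a <> 0 /\ lambda1 mu = / Rabs a ^ 3.
Proof.
  rewrite equilibrium_iff, inv_cubed_norm_y_axis; split.
  - intros (hpos & _ & hy & _).
    assert (ha : a <> 0) by (intros ->; lra).
    split; [exact ha | destruct (Rmult_integral _ _ hy); lra].
  - intros [ha ->]; pose proof (pow2_gt_0 a ha).
    repeat split; [lra | ring ..].
Qed.

Lemma Rpower_pow3 (a : R) : 0 < a -> Rpower a 3 = a ^ 3.
Proof.
  intros ha; rewrite <- Rpower_pow by exact ha; f_equal; simpl; ring.
Qed.

Lemma pow3_eq_inv_iff (l a : R) : 0 < l -> 0 < a ->
  (a ^ 3 = / l <-> a = Rpower l (- (1 / 3))).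
Proof.
  intros hl ha; split.
  - intros h.
    (* [- 3] would be read as a literal, which [Rpower_Ropp] does not match *)
    assert (hl' : l = Rpower a (Ropp 3))
      by (rewrite Rpower_Ropp, Rpower_pow3, h by exact ha; field; lra).
    rewrite hl', Rpower_mult.
    replace (Ropp 3 * - (1 / 3)) with 1 by field.
    now rewrite Rpower_1.
  - intros ->.
    rewrite <- Rpower_pow3 by apply exp_pos.
    rewrite Rpower_mult.
    replace (- (1 / 3) * 3) with (Ropp 1) by field.
    now rewrite Rpower_Ropp, Rpower_1.
Qed.

Lemma Rabs_eq_pos_iff (a c : R) : 0 < c -> (Rabs a = c <-> a = c \/ a = - c).
Proof.
  intros hc; unfold Rabs; destruct (Rcase_abs a); split; intros h; lra.
Qed.

Lemma inv_abs_pow3_iff (l a : R) : 0 < l ->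
  (a <> 0 /\ l = / Rabs a ^ 3 <->
   a = Rpower l (- (1 / 3)) \/ a = - Rpower l (- (1 / 3))).
Proof.
  intros hl.
  assert (hc : 0 < Rpower l (- (1 / 3))) by apply exp_pos.
  rewrite <- Rabs_eq_pos_iff by exact hc; split.
  - intros [ha hla]; apply pow3_eq_inv_iff; [exact hl | now apply Rabs_pos_lt |].
    now rewrite hla, Rinv_inv.
  - intros habs.
    assert (ha : a <> 0) by (intros ->; rewrite Rabs_R0 in habs; lra).
    split; [exact ha |].
    apply pow3_eq_inv_iff in habs; [| exact hl | now apply Rabs_pos_lt].
    now rewrite habs, Rinv_inv.
Qed.

Theorem mainTheorem3 (mu : R) (hmu : 0 < mu <= 1 / 2) :
  (forall x y z : R, equilibrium mu x y z -> z = 0) /\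
  (forall x y z : R, equilibrium mu x y z <->
     ((x, y, z) = (Rpower (lambda2 mu) (- (1 / 3)), 0, 0) \/
      (x, y, z) = (- Rpower (lambda2 mu) (- (1 / 3)), 0, 0) \/
      (x, y, z) = (0, Rpower (lambda1 mu) (- (1 / 3)), 0) \/
      (x, y, z) = (0, - Rpower (lambda1 mu) (- (1 / 3)), 0))).
Proof.
  assert (hl1 : 0 < lambda1 mu) by (apply lambda1_pos; lra).
  assert (hl2 : 0 < lambda2 mu) by (pose proof (lambda1_lt_lambda2 mu); lra).
  split.
  - intros x y z he; destruct (equilibrium_on_axes mu x y z he); tauto.
  - intros x y z; split.
    + intros he.
      destruct (equilibrium_on_axes mu x y z he) as [[-> ->] | [-> ->]].
      * apply equilibrium_x_axis, (inv_abs_pow3_iff _ _ hl2) in he.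
        destruct he as [-> | ->]; auto.
      * apply equilibrium_y_axis, (inv_abs_pow3_iff _ _ hl1) in he.
        destruct he as [-> | ->]; auto.
    + intros [h | [h | [h | h]]]; injection h as -> -> ->;
        [apply equilibrium_x_axis, (inv_abs_pow3_iff _ _ hl2)
        | apply equilibrium_x_axis, (inv_abs_pow3_iff _ _ hl2)
        | apply equilibrium_y_axis, (inv_abs_pow3_iff _ _ hl1)
        | apply equilibrium_y_axis, (inv_abs_pow3_iff _ _ hl1)]; auto.
Qed.
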